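(* Assume the standing hypotheses (H). If $A$ is a part of $G$ with $|A|\ge 3$ and $\{u,v\}\subseteq A$ is a pair of distinct vertices maximizing $|L(u)\cap L(v)|$ over all such pairs in $A$, then $\{u,v\}$ is a good pair for $A$.
   Context: A list assignment $L$ assigns to each vertex $v$ a set $L(v)$ of colors; an $L$-coloring is a proper coloring $f$ with $f(v)\in L(v)$ for all $v$; $\mathrm{ch}$ denotes choice number and $\chi$ chromatic number. A part of a complete multipartite graph is one of its maximal stable sets. Standing hypotheses (H): $k\ge1$ and $n\ge 2k+2$ are integers; $G$ is a complete $k$-partite graph (exactly $k$ nonempty parts) on $n$ vertices; $L$ is a list assignment for $G$ with $|L(v)|\ge\lceil (n+k-1)/3\rceil$ for every vertex $v$; $G$ has no $L$-coloring; $\left|\bigcup_{v\in V(G)}L(v)\right|\le n-1$; and every graph $H$ with fewer than $n$ vertices satisfies $\mathrm{ch}(H)\le\max\{\chi(H),\lceil(|V(H)|+\chi(H)-1)/3\rceil\}$. For $i\in\{1,2,3,4\}$, $k_i$ denotes the number of parts of $G$ of size $i$. For a part $A$ with $|A|\ge3$, a pair $\{u,v\}\subseteq A$ of distinct vertices is a good pair for $A$ if either $|A|=3$ and $|L(u)\cap L(v)|\ge\frac{k_1+k_4+1}{3}$, or $|A|=4$ and $|L(u)\cap L(v)|\ge|L(w)\cap L(z)|$ where $\{w,z\}=A\setminus\{u,v\}$. *)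

From mathcomp Require Import all_boot.
Set Implicit Arguments. Unset Strict Implicit. Unset Printing Implicit Defensive.

(* A (simple) graph is a relation [e : rel T] on a finite vertex type T,
   assumed symmetric and irreflexive where needed. *)

Definition ceil_div (a b : nat) : nat := (a + b - 1) %/ b.

Definition colorable (T : finType) (e : rel T) (c : nat) : bool :=
  [exists f : {ffun T -> 'I_c}, [forall x, forall y, e x y ==> (f x != f y)]].

(* chromatic number: least c <= #|T| such that e is c-colourable
   (for loopless graphs #|T| colours always suffice, so this is the usual
   chromatic number). *)
Definition chi (T : finType) (e : rel T) : nat :=
  \big[minn/#|T|]_(c < #|T|.+1 | colorable e c) c.

Definition L_coloring (T C : finType) (e : rel T) (L : T -> {set C})
  (f : T -> C) : Prop :=
  (forall v, f v \in L v) /\ (forall x y, e x y -> f x != f y).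

(* k-choosable: every list assignment with lists of size >= k (over any
   finite colour set) admits an L-colouring.  ch(H) <= k iff H is k-choosable. *)
Definition choosable (T : finType) (e : rel T) (k : nat) : Prop :=
  forall (C : finType) (L : T -> {set C}),
    (forall v, k <= #|L v|) -> exists f : T -> C, L_coloring e L f.

(* Complete k-partite graph given by a part map p : V -> 'I_k:
   x ~ y iff x and y lie in different parts. *)
Definition kpart_rel (V : finType) (k : nat) (p : V -> 'I_k) : rel V :=
  fun x y => p x != p y.

Definition part (V : finType) (k : nat) (p : V -> 'I_k) (j : 'I_k) : {set V} :=
  [set x | p x == j].

Definition kcount (V : finType) (k : nat) (p : V -> 'I_k) (i : nat) : nat :=
  #|[set j : 'I_k | #|part p j| == i]|.

Definition good_pair (V C : finType) (k : nat) (p : V -> 'I_k)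
  (L : V -> {set C}) (A : {set V}) (u v : V) : Prop :=
  [/\ u \in A, v \in A, u != v &
    ((#|A| = 3 /\ kcount p 1 + kcount p 4 + 1 <= 3 * #|L u :&: L v|)
     \/
     (#|A| = 4 /\
      forall w z, w \in A -> z \in A -> w != z ->
        w \notin [set u; v] -> z \notin [set u; v] ->
        #|L w :&: L z| <= #|L u :&: L v|))].

From mathcomp Require Import all_boot.
From mathcomp Require Import zify.
Set Implicit Arguments. Unset Strict Implicit.

(* Write m = ceil((n+k-1)/3) for the lower bound on list sizes.
   1. No colour c lies in the lists of three vertices x, y, z of one part: the
      graph G - {x,y,z} is smaller, its chromatic number is at most k, and its
      lists with c deleted still have size m - 1, which by the minimality
      hypothesis suffices to colour it; giving x, y, z the colour c then
      L-colours G, a contradiction.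
   2. Double counting colours over a part A therefore gives
      |A| * m <= sum_{x in A} |L(x)| <= 2 |union of the lists| <= 2 (n - 1).
      Hence every part has at most 5 vertices, so n <= 5k, and then no part has
      exactly 5 vertices either.
   3. If |A| = 4, a pair maximising |L(u) :&: L(v)| is good by definition.  If
      |A| = 3, A = {u,v,w}, inclusion-exclusion for three lists gives
      3m <= (n - 1) + 3 |L(u) :&: L(v)|, i.e. k <= 3 |L(u) :&: L(v)|, while
      k1 + k4 + 1 <= k because A itself has size 3.
   The general facts (chromatic number, colouring extension, counting) come
   first, then the consequences of the standing hypotheses, then the theorem. *)

Lemma bigmin_le_term (I : eqType) (r : seq I) (P : pred I) (F : I -> nat) x0 i :
  i \in r -> P i -> \big[minn/x0]_(j <- r | P j) F j <= F i.
Proof.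
elim: r => [|a r IH] //=; rewrite inE big_cons => /orP [/eqP <-|ir] Pi.
  by rewrite Pi geq_minl.
case: (P a); last exact: IH.
by rewrite geq_min IH ?orbT.
Qed.

Lemma chi_le (T : finType) (e : rel T) c : colorable e c -> c <= #|T| -> chi e <= c.
Proof.
move=> col_c c_le; have c_lt : c < #|T|.+1 by [].
exact: (@bigmin_le_term _ (index_enum 'I_#|T|.+1)
          (fun i => colorable e i) (fun i => nat_of_ord i) #|T| (Ordinal c_lt)
          (mem_index_enum _) col_c).
Qed.

Lemma chi_kpart_le (T : finType) k (q : T -> 'I_k) :
  k <= #|T| -> chi (kpart_rel q) <= k.
Proof.
move=> k_le; apply: chi_le k_le; apply/existsP; exists [ffun w => q w].
by apply/forallP => a; apply/forallP => b; rewrite !ffunE; apply/implyP.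
Qed.

Lemma ceil_divP a b : 0 < b -> a <= ceil_div a b * b.
Proof.
move=> b_gt0; rewrite /ceil_div.
have := ltn_pmod (a + b - 1) b_gt0; have := divn_eq (a + b - 1) b; lia.
Qed.

Lemma extend_colouring (V C : finType) (e : rel V) (L : V -> {set C})
    (S : {set V}) (c : C) :
  {in S &, forall x y, ~~ e x y} -> {in S, forall x, c \in L x} ->
  (exists f' : {w : V | w \notin S} -> C,
     L_coloring (fun a b => e (val a) (val b)) (fun w => L (val w) :\ c) f') ->
  exists f : V -> C, L_coloring e L f.
Proof.
move=> S_stable S_c [f' [f'L f'e]].
pose f (w : V) := if insub w is Some w' then f' w' else c.
have f'_neq_c a : f' a != c by have := f'L a; rewrite !inE => /andP [].
exists f; split.
  move=> w; rewrite /f; case: insubP => [w' _ <-| ].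
    by have := f'L w'; rewrite !inE => /andP [].
  by rewrite negbK => /S_c.
move=> a b; rewrite /f.
case: insubP => [a' _ <-| aS]; case: insubP => [b' _ <-| bS].
- exact: f'e.
- by move=> _; rewrite f'_neq_c.
- by move=> _; rewrite eq_sym f'_neq_c.
- by move: aS bS; rewrite !negbK => aS bS; rewrite (negbTE (S_stable _ _ aS bS)).
Qed.

Lemma sum_list_sizes (V C : finType) (L : V -> {set C}) (A : {set V}) :
  \sum_(x in A) #|L x| = \sum_(c : C) #|[set x in A | c \in L x]|.
Proof.
under eq_bigr => x _ do rewrite -sum1_card big_mkcond /=.
rewrite exchange_big /=; apply: eq_bigr => c _.
rewrite -sum1_card [RHS]big_mkcond [LHS]big_mkcond /=; apply: eq_bigr => x _.
by rewrite inE; case: (x \in A); case: (c \in L x).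
Qed.

Lemma sum_list_sizes_le (V C : finType) (L : V -> {set C}) (A : {set V}) :
  (forall c, #|[set x in A | c \in L x]| <= 2) ->
  \sum_(x in A) #|L x| <= 2 * #|\bigcup_(v : V) L v|.
Proof.
move=> at_most2; rewrite sum_list_sizes -sum1_card big_distrr /=.
rewrite [X in _ <= X]big_mkcond /=; apply: leq_sum => c _.
case: ifP => cU; first by rewrite muln1.
rewrite leqn0 cards_eq0; apply/eqP/setP => x; rewrite !inE.
apply/negbTE/negP => /andP [_ cx]; move/negbT: cU => /negP; apply.
by apply/bigcupP; exists x.
Qed.

Lemma cards3_le (C : finType) (A B D : {set C}) :
  #|A| + #|B| + #|D| <= #|A :|: B :|: D| + #|A :&: B| + #|A :&: D| + #|B :&: D|.
Proof.
have AB := cardsUI A B; have ABD := cardsUI (A :|: B) D; rewrite setIUl in ABD.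
have := (leq_card_setU (A :&: D) (B :&: D)).1.
lia.
Qed.

Lemma card_sum_parts (V : finType) k (p : V -> 'I_k) :
  #|V| = \sum_(j : 'I_k) #|part p j|.
Proof.
rewrite -sum1_card (partition_big p predT) //; apply: eq_bigr => j _.
by rewrite -sum1_card; apply: eq_bigl => x; rewrite /= inE.
Qed.

Lemma kcount14_lt (V : finType) k (p : V -> 'I_k) (j : 'I_k) :
  #|part p j| != 1 -> #|part p j| != 4 -> kcount p 1 + kcount p 4 < k.
Proof.
move=> j_ne1 j_ne4.
set S1 := [set i : 'I_k | #|part p i| == 1].
set S4 := [set i : 'I_k | #|part p i| == 4].
have disj : S1 :&: S4 = set0.
  by apply/setP => i; rewrite !inE; case: eqP => // ->.
have := cardsUI S1 S4; rewrite disj cards0 addn0 => card_S14.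
have j_out : j \notin S1 :|: S4 by rewrite !inE negb_or j_ne1.
have := max_card (mem (j |: (S1 :|: S4))); rewrite card_ord.
by rewrite [#|mem _|]cardsU1 j_out card_S14.
Qed.

Section StandingHypotheses.

Variables (k n : nat) (V C : finType) (p : V -> 'I_k) (L : V -> {set C}).
Hypothesis hk : 1 <= k.
Hypothesis hn : 2 * k + 2 <= n.
Hypothesis hV : #|V| = n.
Hypothesis hL : forall v, ceil_div (n + k - 1) 3 <= #|L v|.
Hypothesis hnocol : ~ exists f : V -> C, L_coloring (kpart_rel p) L f.
Hypothesis hunion : #|\bigcup_(v : V) L v| <= n - 1.
Hypothesis hmin : forall (T : finType) (e : rel T), #|T| < n ->
  symmetric e -> irreflexive e ->
  choosable e (maxn (chi e) (ceil_div (#|T| + chi e - 1) 3)).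

Local Notation m := (ceil_div (n + k - 1) 3).

(* Deleting three vertices and one colour from every list leaves an
   L-colourable graph: by minimality, lists of size m - 1 suffice for it. *)
Lemma colour_after_deleting_three (S : {set V}) (c : C) : #|S| = 3 ->
  exists f' : {w : V | w \notin S} -> C,
    L_coloring (fun a b => kpart_rel p (val a) (val b)) (fun w => L (val w) :\ c) f'.
Proof.
move=> card_S; pose T := {w : V | w \notin S}.
have card_T : #|{: T}| = n - 3.
  rewrite card_sig -hV -card_S -(cardsC S) addKn; apply: eq_card => w.
  by rewrite !inE.
pose q (w : T) := p (val w).
have chi_T : chi (kpart_rel q) <= k by apply: chi_kpart_le; rewrite card_T; lia.
have sym : symmetric (kpart_rel q) by move=> a b; rewrite /kpart_rel eq_sym.
have irr : irreflexive (kpart_rel q) by move=> a; rewrite /kpart_rel eqxx.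
have small_T : #|{: T}| < n by rewrite card_T; lia.
have lists_big (x : V) :
    maxn (chi (kpart_rel q)) (ceil_div (#|{: T}| + chi (kpart_rel q) - 1) 3)
      <= #|L x :\ c|.
  have := hL x; have := cardsD1 c (L x); have := leq_b1 (c \in L x).
  rewrite card_T /ceil_div geq_max => ? ? ?; apply/andP; split; lia.
have [|f' f'_col] := hmin small_T sym irr (L := fun w : T => L (val w) :\ c).
  by move=> w; apply: lists_big.
by exists f'.
Qed.

Lemma colour_in_at_most_two_lists (j : 'I_k) (c : C) :
  #|[set x in part p j | c \in L x]| <= 2.
Proof.
rewrite leqNgt; apply/negP => /card_gt2P [x [y [z [[hx hy hz] [xy yz zx]]]]].
move: hx hy hz; rewrite !inE.
move=> /andP [/eqP px cx] /andP [/eqP py cy] /andP [/eqP pz cz].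
pose S : {set V} := [set x; y; z].
have S_props w : w \in S -> c \in L w /\ p w = j.
  by rewrite !inE => /orP [/orP [] | ] /eqP ->.
apply: hnocol; apply: (@extend_colouring _ _ _ _ S c).
- by move=> a b /S_props [_ pa] /S_props [_ pb]; rewrite /kpart_rel pa pb eqxx.
- by move=> w /S_props [].
- apply: colour_after_deleting_three.
  rewrite /S -setUA !cardsU1 cards1 !inE.
  by rewrite (negbTE xy) yz eq_sym (negbTE zx).
Qed.

Lemma part_size_bound (j : 'I_k) : #|part p j| * m <= 2 * (n - 1).
Proof.
apply: (@leq_trans (\sum_(x in part p j) #|L x|)).
  by rewrite -sum_nat_const; apply: leq_sum => x _; exact: hL.
apply: leq_trans (sum_list_sizes_le (colour_in_at_most_two_lists j)) _.
by rewrite leq_mul2l hunion orbT.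
Qed.

(* Since 3m >= n + k - 1 > n - 1, a part of size 6 would violate the bound. *)
Lemma part_size_le5 (j : 'I_k) : #|part p j| <= 5.
Proof.
rewrite leqNgt; apply/negP => big_part.
have := part_size_bound j; have := ceil_divP (n + k - 1) (isT : 0 < 3).
have : 6 * m <= #|part p j| * m by rewrite leq_mul2r big_part orbT.
lia.
Qed.

Lemma order_le_5k : n <= 5 * k.
Proof.
rewrite -hV (card_sum_parts p); apply: (@leq_trans (\sum_(j : 'I_k) 5)).
  by apply: leq_sum => j _; exact: part_size_le5.
by rewrite big_const_ord iter_addn_0 mulnC.
Qed.

(* A part of size 5 would force 5(n + k - 1) <= 6(n - 1), i.e. n > 5k. *)
Lemma part_size_ne5 (j : 'I_k) : #|part p j| != 5.
Proof.
apply/negP => /eqP size5; have := part_size_bound j; rewrite size5.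
have := order_le_5k; have := ceil_divP (n + k - 1) (isT : 0 < 3); lia.
Qed.

Lemma triangle_part_bound (u v w : V) :
  #|L u :&: L w| <= #|L u :&: L v| -> #|L v :&: L w| <= #|L u :&: L v| ->
  k <= 3 * #|L u :&: L v|.
Proof.
move=> uw_le vw_le.
have union_le : #|L u :|: L v :|: L w| <= n - 1.
  apply: leq_trans hunion; apply: subset_leq_card; apply/subsetP => c.
  rewrite !inE => /orP [/orP [] | ] hc; apply/bigcupP;
    by [exists u | exists v | exists w].
have := cards3_le (L u) (L v) (L w); have := ceil_divP (n + k - 1) (isT : 0 < 3).
have := hL u; have := hL v; have := hL w; lia.
Qed.

End StandingHypotheses.

Theorem corollary22
  (k n : nat) (V C : finType) (p : V -> 'I_k) (L : V -> {set C})
  (hk : 1 <= k) (hn : 2 * k + 2 <= n)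
  (hV : #|V| = n)
  (hsurj : forall j : 'I_k, exists x : V, p x = j)
  (hL : forall v, ceil_div (n + k - 1) 3 <= #|L v|)
  (hnocol : ~ exists f : V -> C, L_coloring (kpart_rel p) L f)
  (hunion : #|\bigcup_(v : V) L v| <= n - 1)
  (hmin : forall (T : finType) (e : rel T), #|T| < n ->
      symmetric e -> irreflexive e ->
      choosable e (maxn (chi e) (ceil_div (#|T| + chi e - 1) 3)))
  (j : 'I_k) (u v : V)
  (hA : 3 <= #|part p j|)
  (hu : u \in part p j) (hv : v \in part p j) (huv : u != v)
  (hmax : forall x y, x \in part p j -> y \in part p j -> x != y ->
      #|L x :&: L y| <= #|L u :&: L v|) :
  good_pair p L (part p j) u v.
Proof.
have le5 := part_size_le5 hk hn hV hL hnocol hunion hmin j.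
have ne5 := part_size_ne5 hk hn hV hL hnocol hunion hmin j.
split => //; have [size3|size_ne3] := eqVneq #|part p j| 3; last first.
  right; split; first lia.
  by move=> w z hw hz wz _ _; apply: hmax.
left; split => //.
have [w] : exists w, w \in part p j :\ u :\ v.
  apply/card_gt0P; have := cardsD1 u (part p j).
  have := cardsD1 v (part p j :\ u); rewrite hu in_setD1 eq_sym huv hv /=; lia.
rewrite !in_setD1 => /and3P [wv wu hw].
have uw_le : #|L u :&: L w| <= #|L u :&: L v| by apply: hmax; rewrite // eq_sym.
have vw_le : #|L v :&: L w| <= #|L u :&: L v| by apply: hmax; rewrite // eq_sym.
have := triangle_part_bound hk hn hV hL hunion uw_le vw_le.
have := @kcount14_lt _ _ p j; rewrite size3; lia.
Qed.
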